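(* Let $K=[x_1,x_2]\times[y_1,y_2]\in T_h$ with vertices $P_1=(x_1,y_1)$, $P_2=(x_2,y_1)$, $P_3=(x_2,y_2)$, $P_4=(x_1,y_2)$, and $h_x=x_2-x_1$, $h_y=y_2-y_1$. For $w,v\in U_h$ (restricted to $K$, so that $w_{xy}$ is constant on $K$), we have $$\int_{P_1P_4}(\Pi_h^*v-v)w_x\,dy=\frac{h_y^3}{24}v_y(x_1,y)w_{xy},\qquad \int_{P_1P_4}(\Pi_h^*v-v)w_y\,dy=0,$$ $$\int_{P_2P_3}(\Pi_h^*v-v)w_x\,dy=\frac{h_y^3}{24}v_y(x_2,y)w_{xy},\qquad \int_{P_2P_3}(\Pi_h^*v-v)w_y\,dy=0,$$ $$\int_{P_1P_2}(\Pi_h^*v-v)w_y\,dx=\frac{h_x^3}{24}v_x(x,y_1)w_{xy},\qquad \int_{P_1P_2}(\Pi_h^*v-v)w_x\,dx=0,$$ $$\int_{P_4P_3}(\Pi_h^*v-v)w_y\,dx=\frac{h_x^3}{24}v_x(x,y_2)w_{xy},\qquad \int_{P_4P_3}(\Pi_h^*v-v)w_x\,dx=0,$$ where the derivatives of $w,v$ are those of their restrictions to $K$ (note $v_y(x_1,y)$ is independent of $y$ and $v_x(x,y_1)$ is independent of $x$).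
   Context: $\Omega\subset\mathbb{R}^2$ is an open rectangle, $T_h$ a conforming partition of $\overline\Omega$ into closed rectangles with sides parallel to the axes, $N_h$ its set of nodes. The dual partition $T_h^*$ is obtained by connecting the center of each element to the midpoints of its edges; the control volume $K_P^*$ of a node $P$ is the union of the resulting sub-rectangles having $P$ as a vertex. $U_h=\{v\in C^0(\overline\Omega): v|_K\in Q_1(K)\ \forall K,\ v|_{\partial\Omega}=0\}$ ($Q_1$ = bilinear polynomials). $\Pi_h^*v=\sum_{P\in N_h}v(P)\chi_P$, $\chi_P$ the characteristic function of $K_P^*$; thus on an edge of $K$, $\Pi_h^*v$ equals the value of $v$ at the nearer endpoint. *)

From Stdlib Require Import Reals.
From Coquelicot Require Import Coquelicot.
Open Scope R_scope.

Record Q1 := mkQ1 { c0 : R; cx : R; cy : R; cxy : R }.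

Definition Q1eval (p : Q1) (x y : R) : R := c0 p + cx p * x + cy p * y + cxy p * x * y.

(* Partial derivatives of the polynomial (i.e. of the restriction to K). *)
Definition Q1dx (p : Q1) (x y : R) : R := Derive (fun t => Q1eval p t y) x.
Definition Q1dy (p : Q1) (x y : R) : R := Derive (fun t => Q1eval p x t) y.
Definition Q1dxy (p : Q1) (x y : R) : R := Derive (fun t => Q1dx p x t) y.

(* Pi_h^* v on an edge of K: the value of v at the nearer endpoint.
   Vertical edge {a} x [b1,b2], point (a,t): *)
Definition PiV (v : R -> R -> R) (a b1 b2 t : R) : R :=
  if Rle_dec (t - b1) (b2 - t) then v a b1 else v a b2.
Definition PiH (v : R -> R -> R) (b a1 a2 t : R) : R :=
  if Rle_dec (t - a1) (a2 - t) then v a1 b else v a2 b.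

(** On an edge [[a, b]] the function [v] is affine with slope [d] and the
    derivative of [w] along the edge is affine with slope [l]. On the half of
    the edge nearer to the endpoint [e], [Pi_h^* v - v] equals [d (e - t)], so
    the integrand is a quadratic polynomial; integrating it over both halves,
    all terms cancel except [(b - a)^3 / 24 * d * l]. Across the edge the
    relevant derivative of [w] is constant ([l = 0]), which gives the vanishing
    integrals; along it, [l = w_xy]. *)

From Stdlib Require Import Reals Lra.
From Coquelicot Require Import Coquelicot.
Open Scope R_scope.

Lemma Q1dx_eq (p : Q1) (x y : R) : Q1dx p x y = cx p + cxy p * y.
Proof.
  unfold Q1dx, Q1eval. apply is_derive_unique. auto_derive; auto; ring.
Qed.

Lemma Q1dy_eq (p : Q1) (x y : R) : Q1dy p x y = cy p + cxy p * x.
Proof.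
  unfold Q1dy, Q1eval. apply is_derive_unique. auto_derive; auto; ring.
Qed.

Lemma Q1dxy_eq (p : Q1) (x y : R) : Q1dxy p x y = cxy p.
Proof.
  unfold Q1dxy. apply is_derive_unique.
  apply (is_derive_ext (fun t => cx p + cxy p * t)).
  - intro t. now rewrite Q1dx_eq.
  - auto_derive; auto; ring.
Qed.

Definition affine_error_prim (d k l e t : R) : R :=
  d * (e * k * t + (e * l - k) * t ^ 2 / 2 - l * t ^ 3 / 3).

Lemma is_RInt_affine_error (h : R -> R) (d k l e u w : R) :
  u <= w -> (forall t, u < t < w -> h t = d * (e - t) * (k + l * t)) ->
  is_RInt h u w (affine_error_prim d k l e w - affine_error_prim d k l e u).
Proof.
  intros Huw Hh.
  apply (is_RInt_ext (fun t => d * (e - t) * (k + l * t))).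
  - rewrite Rmin_left, Rmax_right by exact Huw.
    intros t Ht. symmetry. apply Hh. lra.
  - apply (is_RInt_derive (affine_error_prim d k l e)).
    + intros t _. unfold affine_error_prim. auto_derive; auto. field.
    + intros t _.
      apply (ex_derive_continuous (K := R_AbsRing) (V := R_NormedModule)).
      auto_derive; auto.
Qed.

Lemma RInt_nearest_endpoint_error (f g : R -> R) (a b c d k l : R) :
  a < b ->
  (forall t, a <= t <= b -> f t = c + d * t) ->
  (forall t, a <= t <= b -> g t = k + l * t) ->
  RInt (fun t => ((if Rle_dec (t - a) (b - t) then f a else f b) - f t) * g t) a b
  = (b - a) ^ 3 / 24 * d * l.
Proof.
  intros Hab Hf Hg.
  set (m := (a + b) / 2).
  assert (Ham : a <= m) by (unfold m; lra).
  assert (Hmb : m <= b) by (unfold m; lra).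
  apply is_RInt_unique.
  replace ((b - a) ^ 3 / 24 * d * l) with
    (plus (affine_error_prim d k l a m - affine_error_prim d k l a a)
          (affine_error_prim d k l b b - affine_error_prim d k l b m))
    by (unfold plus, affine_error_prim, m; simpl; field).
  apply (is_RInt_Chasles (V := R_CompleteNormedModule) _ a m b);
    apply is_RInt_affine_error; auto; intros t Ht;
    destruct (Rle_dec (t - a) (b - t)); try (unfold m in Ht; lra);
    rewrite Hg, !Hf by lra; ring.
Qed.

Section EdgeIntegrals.

Variables (x1 x2 y1 y2 : R) (v : R -> R -> R) (pv pw : Q1).
Hypothesis (Hx : x1 < x2) (Hy : y1 < y2).
Hypothesis Hv : forall x y, x1 <= x <= x2 -> y1 <= y <= y2 -> v x y = Q1eval pv x y.

Lemma RInt_PiV_error (a k l : R) (g : R -> R) :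
  x1 <= a <= x2 -> (forall t, g t = k + l * t) ->
  RInt (fun t => (PiV v a y1 y2 t - v a t) * g t) y1 y2
  = (y2 - y1) ^ 3 / 24 * (cy pv + cxy pv * a) * l.
Proof.
  intros Ha Hg. unfold PiV.
  apply (RInt_nearest_endpoint_error (v a) g _ _ (c0 pv + cx pv * a) _ k);
    auto; intros t Ht. rewrite Hv by lra. unfold Q1eval. ring.
Qed.

Lemma RInt_PiH_error (b k l : R) (g : R -> R) :
  y1 <= b <= y2 -> (forall t, g t = k + l * t) ->
  RInt (fun t => (PiH v b x1 x2 t - v t b) * g t) x1 x2
  = (x2 - x1) ^ 3 / 24 * (cx pv + cxy pv * b) * l.
Proof.
  intros Hb Hg. unfold PiH.
  apply (RInt_nearest_endpoint_error (fun t => v t b) g _ _ (c0 pv + cy pv * b) _ k);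
    auto; intros t Ht. rewrite Hv by lra. unfold Q1eval. ring.
Qed.

Lemma RInt_PiV_error_dx (a y : R) : x1 <= a <= x2 ->
  RInt (fun t => (PiV v a y1 y2 t - v a t) * Q1dx pw a t) y1 y2
  = (y2 - y1) ^ 3 / 24 * Q1dy pv a y * cxy pw.
Proof.
  intros Ha. rewrite Q1dy_eq.
  apply (RInt_PiV_error a (cx pw)); auto using Q1dx_eq.
Qed.

Lemma RInt_PiV_error_dy (a : R) : x1 <= a <= x2 ->
  RInt (fun t => (PiV v a y1 y2 t - v a t) * Q1dy pw a t) y1 y2 = 0.
Proof.
  intros Ha. rewrite (RInt_PiV_error a (cy pw + cxy pw * a) 0); auto with real.
  intro t. rewrite Q1dy_eq. ring.
Qed.

Lemma RInt_PiH_error_dy (b x : R) : y1 <= b <= y2 ->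
  RInt (fun t => (PiH v b x1 x2 t - v t b) * Q1dy pw t b) x1 x2
  = (x2 - x1) ^ 3 / 24 * Q1dx pv x b * cxy pw.
Proof.
  intros Hb. rewrite Q1dx_eq.
  apply (RInt_PiH_error b (cy pw)); auto.
  intro t. rewrite Q1dy_eq. ring.
Qed.

Lemma RInt_PiH_error_dx (b : R) : y1 <= b <= y2 ->
  RInt (fun t => (PiH v b x1 x2 t - v t b) * Q1dx pw t b) x1 x2 = 0.
Proof.
  intros Hb. rewrite (RInt_PiH_error b (cx pw + cxy pw * b) 0); auto with real.
  intro t. rewrite Q1dx_eq. ring.
Qed.

End EdgeIntegrals.

Theorem lemma3p2 (x1 x2 y1 y2 : R) (v w : R -> R -> R) (pv pw : Q1) :
  x1 < x2 -> y1 < y2 ->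
  (forall x y, x1 <= x <= x2 -> y1 <= y <= y2 -> v x y = Q1eval pv x y) ->
  (forall x y, x1 <= x <= x2 -> y1 <= y <= y2 -> w x y = Q1eval pw x y) ->
  forall x0 y0 x y, x1 <= x0 <= x2 -> y1 <= y0 <= y2 ->
    x1 <= x <= x2 -> y1 <= y <= y2 ->
  let hx := x2 - x1 in let hy := y2 - y1 in
  let wxy := Q1dxy pw x0 y0 in
  (* edge P1P4 : x = x1 *)
  RInt (fun t => (PiV v x1 y1 y2 t - v x1 t) * Q1dx pw x1 t) y1 y2
    = hy ^ 3 / 24 * Q1dy pv x1 y * wxy /\
  RInt (fun t => (PiV v x1 y1 y2 t - v x1 t) * Q1dy pw x1 t) y1 y2 = 0 /\
  (* edge P2P3 : x = x2 *)
  RInt (fun t => (PiV v x2 y1 y2 t - v x2 t) * Q1dx pw x2 t) y1 y2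
    = hy ^ 3 / 24 * Q1dy pv x2 y * wxy /\
  RInt (fun t => (PiV v x2 y1 y2 t - v x2 t) * Q1dy pw x2 t) y1 y2 = 0 /\
  (* edge P1P2 : y = y1 *)
  RInt (fun t => (PiH v y1 x1 x2 t - v t y1) * Q1dy pw t y1) x1 x2
    = hx ^ 3 / 24 * Q1dx pv x y1 * wxy /\
  RInt (fun t => (PiH v y1 x1 x2 t - v t y1) * Q1dx pw t y1) x1 x2 = 0 /\
  (* edge P4P3 : y = y2 *)
  RInt (fun t => (PiH v y2 x1 x2 t - v t y2) * Q1dy pw t y2) x1 x2
    = hx ^ 3 / 24 * Q1dx pv x y2 * wxy /\
  RInt (fun t => (PiH v y2 x1 x2 t - v t y2) * Q1dx pw t y2) x1 x2 = 0.
Proof.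
  intros Hx Hy Hv _ x0 y0 x y _ _ _ _ hx hy wxy.
  unfold wxy, hx, hy. rewrite Q1dxy_eq.
  repeat split.
  - apply (RInt_PiV_error_dx x1 x2 y1 y2 v pv); auto; lra.
  - apply (RInt_PiV_error_dy x1 x2 y1 y2 v pv); auto; lra.
  - apply (RInt_PiV_error_dx x1 x2 y1 y2 v pv); auto; lra.
  - apply (RInt_PiV_error_dy x1 x2 y1 y2 v pv); auto; lra.
  - apply (RInt_PiH_error_dy x1 x2 y1 y2 v pv); auto; lra.
  - apply (RInt_PiH_error_dx x1 x2 y1 y2 v pv); auto; lra.
  - apply (RInt_PiH_error_dy x1 x2 y1 y2 v pv); auto; lra.
  - apply (RInt_PiH_error_dx x1 x2 y1 y2 v pv); auto; lra.
Qed.
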